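(* Assume $f(\cdot,u_t)$ is a diffeomorphism for all $t$ and that the relevant matrices are invertible. Consider (A) the pure fading-memory extended Kalman filter in the form $s_{t|t-1}=f(s_{t-1},u_t)$, $P_{t|t-1}=(1+\alpha_t)F_{t-1}P_{t-1}F_{t-1}^\top$, $\hat y_t=h(s_{t|t-1},u_t)$, $P_t^{-1}=P_{t|t-1}^{-1}+\mathcal I_t$, $s_t=s_{t|t-1}+P_t g_t^\top$; and (B) the recursion $s_{t|t-1}=f(s_{t-1},u_t)$, $\hat y_t=h(s_{t|t-1},u_t)$, $J_t=(1-\gamma_t)(F_{t-1}^{-1})^\top J_{t-1}F_{t-1}^{-1}+\gamma_t\mathcal I_t$, $s_t=s_{t|t-1}+\eta_tJ_t^{-1}g_t^\top$, where $F_{t-1}=\partial f/\partial s|_{(s_{t-1},u_t)}$, $g_t=\partial\ln p_{\mathrm{obs}}(y_t\mid h(s,u_t))/\partial s|_{s=s_{t|t-1}}$ and $\mathcal I_t=\mathbb E_{y\sim p_{\mathrm{obs}}(\cdot\mid\hat y_t)}[(\partial\ln p_{\mathrm{obs}}(y\mid h(s,u_t))/\partial s|_{s=s_{t|t-1}})^{\otimes2}]$. If the hyperparameters satisfy $\eta_t=\gamma_t$ and $\frac1{\eta_t}=\frac1{1+\alpha_t}\frac1{\eta_{t-1}}+1$ for $t\ge1$, and both are initialized at the same $s_0$ with $P_0=\eta_0J_0^{-1}$, then for all $t\ge0$ both produce the same $s_t$ and $P_t=\eta_tJ_t^{-1}$.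
   Context: Conventions: gradients of real functions are row vectors; for a row vector $v$, $v^{\otimes2}=v^\top v$. $p_{\mathrm{obs}}(y\mid\hat y)$ is an exponential family parameterized by its mean parameter $\hat y$; $f,h$ are smooth; $u_t$ are inputs, $y_t$ observations, $\alpha_t\ge0$ fading-memory weights, $\eta_t$ learning rates, $\gamma_t$ decay rates. *)

(* the statement is purely algebraic (matrix recursions) once the
   model-dependent quantities (Jacobian of f, score g_t, Fisher information I_t)
   are abstracted as functions of the predicted/previous state. *)
From HB Require Import structures.
From mathcomp Require Import all_boot all_order all_algebra.
Set Implicit Arguments. Unset Strict Implicit. Unset Printing Implicit Defensive.
Import Order.TTheory GRing.Theory Num.Theory.
Local Open Scope ring_scope.

(* Model data (time index t refers to the input u_t):
   f  t s   = f(s, u_t)                      (state transition, s column vector)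
   Jf t s   = ∂f/∂s at (s, u_t)              (so F_{t-1} = Jf t s_{t-1})
   gr t s   = ∂ ln p_obs(y_t | h(s',u_t))/∂s' at s' = s   (row vector)
   Fi t s   = E_{y ~ p_obs(.|h(s,u_t))}[(∂ ln p_obs(y | h(s',u_t))/∂s' at s)^{⊗2}]
   so that g_t = gr t s_{t|t-1} and I_t = Fi t s_{t|t-1}. *)

Definition ekfA_step (R : realFieldType) (n : nat)
    (f : nat -> 'cV[R]_n -> 'cV[R]_n) (Jf : nat -> 'cV[R]_n -> 'M[R]_n)
    (gr : nat -> 'cV[R]_n -> 'rV[R]_n) (Fi : nat -> 'cV[R]_n -> 'M[R]_n)
    (alpha : nat -> R)
    (s sp : nat -> 'cV[R]_n) (P Pp : nat -> 'M[R]_n) (t : nat) : Prop :=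
  [/\ sp t.+1 = f t.+1 (s t),
      Pp t.+1 = (1 + alpha t.+1) *: (Jf t.+1 (s t) *m P t *m (Jf t.+1 (s t))^T),
      invmx (P t.+1) = invmx (Pp t.+1) + Fi t.+1 (sp t.+1) &
      s t.+1 = sp t.+1 + P t.+1 *m (gr t.+1 (sp t.+1))^T].

Definition recB_step (R : realFieldType) (n : nat)
    (f : nat -> 'cV[R]_n -> 'cV[R]_n) (Jf : nat -> 'cV[R]_n -> 'M[R]_n)
    (gr : nat -> 'cV[R]_n -> 'rV[R]_n) (Fi : nat -> 'cV[R]_n -> 'M[R]_n)
    (eta gamma : nat -> R)
    (s sp : nat -> 'cV[R]_n) (J : nat -> 'M[R]_n) (t : nat) : Prop :=
  [/\ sp t.+1 = f t.+1 (s t),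
      J t.+1 = (1 - gamma t.+1) *: ((invmx (Jf t.+1 (s t)))^T *m J t *m invmx (Jf t.+1 (s t)))
               + gamma t.+1 *: Fi t.+1 (sp t.+1) &
      s t.+1 = sp t.+1 + eta t.+1 *: (invmx (J t.+1) *m (gr t.+1 (sp t.+1))^T)].

(** Both recursions propagate the same information matrix up to the scalar
    [eta]: if [P_t = eta_t J_t^-1], then the EKF prediction step gives
    [P_{t|t-1}^-1 = ((1 + alpha_t) eta_{t-1})^-1 F^-T J_{t-1} F^-1], and the
    learning-rate recursion [1/eta_t - 1 = (1/eta_{t-1}) / (1 + alpha_t)] is exactly
    what turns the Fisher update [P_t^-1 = P_{t|t-1}^-1 + I_t] into
    [eta_t^-1 J_t].  Since both filters then use the same gain [P_t = eta_t J_t^-1],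
    they produce the same states. *)
From HB Require Import structures.
From mathcomp Require Import all_boot all_order all_algebra.
From mathcomp Require Import ring.
Import Order.TTheory GRing.Theory Num.Theory.
Local Open Scope ring_scope.

Lemma invmx_unique (R : comUnitRingType) n (A B : 'M[R]_n) :
  A \in unitmx -> B *m A = 1%:M -> invmx A = B.
Proof. by move=> uA BA; rewrite -(mulmxK uA B) BA mul1mx. Qed.

Lemma invmx_congr_tr (R : comUnitRingType) n (F M : 'M[R]_n) :
  F \in unitmx -> M \in unitmx ->
  invmx (F *m M *m F^T) = (invmx F)^T *m invmx M *m invmx F.
Proof.
move=> uF uM; apply: invmx_unique; first by rewrite !unitmx_mul unitmx_tr uF uM.
by rewrite !mulmxA (mulmxKV uF) (mulmxKV uM) -trmx_mul mulmxV // trmx1.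
Qed.

Lemma fading_rate_gt0 {R : realFieldType} {alpha eta : nat -> R} :
  (forall t, 0 <= alpha t) -> 0 < eta 0 ->
  (forall t, (eta t.+1)^-1 = (1 + alpha t.+1)^-1 * (eta t)^-1 + 1) ->
  forall t, 0 < eta t.
Proof.
move=> alpha_ge0 eta0_gt0 eta_rec; elim=> // t eta_gt0.
by rewrite -invr_gt0 eta_rec ltr_wpDl // mulr_ge0 // invr_ge0 ltW // ltr_wpDr.
Qed.

Section InformationUpdate.

Context {R : realFieldType} {n : nat} {F J Fisher : 'M[R]_n} {a e e' : R}.
Hypotheses (uF : F \in unitmx) (uJ : J \in unitmx) (a_ge0 : 0 <= a) (e_gt0 : 0 < e).
Hypothesis e'_rec : e'^-1 = (1 + a)^-1 * e^-1 + 1.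

Lemma predicted_information :
  invmx ((1 + a) *: (F *m (e *: invmx J) *m F^T)) =
  ((1 + a)^-1 * e^-1) *: ((invmx F)^T *m J *m invmx F).
Proof.
have ae_unit : (1 + a) * e \is a GRing.unit.
  by rewrite unitfE gt_eqF // mulr_gt0 // ltr_wpDr.
rewrite -scalemxAr -scalemxAl scalerA invmxZ; last first.
  by rewrite unitmxZ // !unitmx_mul unitmx_tr unitmx_inv uF uJ.
by rewrite invmx_congr_tr ?unitmx_inv // invmxK invfM mulrC.
Qed.

Lemma updated_information :
  invmx ((1 + a) *: (F *m (e *: invmx J) *m F^T)) + Fisher =
  e'^-1 *: ((1 - e') *: ((invmx F)^T *m J *m invmx F) + e' *: Fisher).
Proof.
have e'_neq0 : e' != 0.
  rewrite gt_eqF // -invr_gt0 e'_rec ltr_wpDl // mulr_ge0 // invr_ge0 ltW //.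
  by rewrite ltr_wpDr.
rewrite predicted_information scalerDr !scalerA mulVf // scale1r.
by congr (_ *: _ + _); rewrite mulrBr mulr1 mulVf // e'_rec; ring.
Qed.

End InformationUpdate.

Theorem proposition14 (R : realFieldType) (n : nat)
    (f : nat -> 'cV[R]_n -> 'cV[R]_n) (Jf : nat -> 'cV[R]_n -> 'M[R]_n)
    (gr : nat -> 'cV[R]_n -> 'rV[R]_n) (Fi : nat -> 'cV[R]_n -> 'M[R]_n)
    (alpha eta gamma : nat -> R)
    (sA spA : nat -> 'cV[R]_n) (P Pp : nat -> 'M[R]_n)
    (sB spB : nat -> 'cV[R]_n) (J : nat -> 'M[R]_n)
    (hJf : forall t x, Jf t x \in unitmx)
    (hP : forall t, P t \in unitmx) (hPp : forall t, Pp t.+1 \in unitmx)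
    (hJ : forall t, J t \in unitmx)
    (halpha : forall t, 0 <= alpha t) (heta0 : 0 < eta 0)
    (hA : forall t, ekfA_step f Jf gr Fi alpha sA spA P Pp t)
    (hB : forall t, recB_step f Jf gr Fi eta gamma sB spB J t)
    (hgam : forall t, gamma t.+1 = eta t.+1)
    (heta : forall t, (eta t.+1)^-1 = (1 + alpha t.+1)^-1 * (eta t)^-1 + 1)
    (hs0 : sA 0 = sB 0) (hP0 : P 0 = eta 0 *: invmx (J 0)) :
  forall t, sA t = sB t /\ P t = eta t *: invmx (J t).
Proof.
have eta_gt0 := fading_rate_gt0 halpha heta0 heta.
elim=> [|t [s_eq P_eq]] //.
have [spA_def Pp_def invP_def sA_def] := hA t.
have [spB_def J_def sB_def] := hB t.
have sp_eq : spA t.+1 = spB t.+1 by rewrite spA_def spB_def s_eq.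
have eta_neq0 : eta t.+1 != 0 by rewrite gt_eqF.
have invP_eq : invmx (P t.+1) = (eta t.+1)^-1 *: J t.+1.
  rewrite invP_def Pp_def s_eq P_eq sp_eq J_def hgam.
  exact: updated_information (hJf _ _) (hJ t) (halpha _) (eta_gt0 t) (heta t).
have P_next : P t.+1 = eta t.+1 *: invmx (J t.+1).
  rewrite -[P t.+1]invmxK invP_eq invmxZ ?invrK //.
  by rewrite unitmxZ ?hJ // unitfE invr_eq0.
by split; rewrite // sA_def sB_def sp_eq P_next scalemxAl.
Qed.
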